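(* For $\lambda\in\Lambda$ let $E_\lambda$ be a congruence on $\overline{\boldsymbol{T}(X_1,\ldots,X_n)}$, and let $E$ be the congruence generated by $\bigcup_{\lambda\in\Lambda}E_\lambda$. Let $F_1,F_2$ be congruences on $\overline{\boldsymbol{T}(X_1,\ldots,X_n)}$. Then: (1) $\boldsymbol{V}(\Delta)=\mathbb{R}^n$ and $\boldsymbol{V}\big(\overline{\boldsymbol{T}(X_1,\ldots,X_n)}\times\overline{\boldsymbol{T}(X_1,\ldots,X_n)}\big)=\varnothing$; (2) $\boldsymbol{V}(E)=\bigcap_{\lambda\in\Lambda}\boldsymbol{V}(E_\lambda)$; (3) $\boldsymbol{V}(F_1\rtimes F_2)=\boldsymbol{V}(F_1)\cup\boldsymbol{V}(F_2)$.
   Context: $\boldsymbol{T}=\mathbb{R}\cup\{-\infty\}$ with $a\oplus b=\max\{a,b\}$, $a\odot b=a+b$. $\overline{\boldsymbol{T}[X_1,\ldots,X_n]}$ is the tropical polynomial semiring modulo identifying polynomials defining the same function $\boldsymbol{T}^n\to\boldsymbol{T}$; it is cancellative and $\overline{\boldsymbol{T}(X_1,\ldots,X_n)}$ is its semifield of fractions. Each element defines a function $\mathbb{R}^n\to\boldsymbol{T}$ (quotients evaluated as differences); $-\infty$ is the constant $-\infty$, other elements are real valued. A congruence is an equivalence relation compatible with $\oplus$ and $\odot$; $\Delta$ is the diagonal (trivial congruence); the congruence generated by a set is the smallest congruence containing it. $\boldsymbol{V}(E)=\{x\in\mathbb{R}^n\mid f(x)=g(x)\ \forall(f,g)\in E\}$.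 The twisted product is $(f_1,f_2)\rtimes(g_1,g_2):=(f_1\odot g_1\oplus f_2\odot g_2,\ f_1\odot g_2\oplus f_2\odot g_1)$, and $F_1\rtimes F_2$ is the congruence generated by $\{a\rtimes b\mid a\in F_1,b\in F_2\}$. *)

From HB Require Import structures.
From mathcomp Require Import all_boot all_order all_algebra.
From mathcomp Require Import boolp classical_sets reals constructive_ereal.
Set Implicit Arguments. Unset Strict Implicit. Unset Printing Implicit Defensive.
Import Order.TTheory GRing.Theory Num.Theory.
Local Open Scope ring_scope.
Local Open Scope ereal_scope.
Local Open Scope classical_set_scope.

Section Tropical.
Variables (R : realType) (n : nat).

Definition point := 'I_n -> R.

(* Elements of T bar(X_1..X_n) are represented by the functions R^n -> T
   they define; T = R u {-oo} is realised inside \bar R. *)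
Definition tfun := point -> \bar R.

(* tropical polynomial functions: max over a finite list of monomials
   a (.) X^k = a + sum_i k_i x_i ; the empty list gives the constant -oo *)
Definition trop_poly (p : tfun) : Prop :=
  exists s : seq (R * ('I_n -> nat)),
    forall x : point,
      p x = \big[maxe/-oo]_(m <- s) ((m.1 + \sum_(i < n) (m.2 i)%:R * x i)%R)%:E.

(* elements of the semifield of fractions: f = p / q (evaluated as p - q),
   with q not the tropical zero (q is then real valued everywhere) *)
Definition trop_rat (f : tfun) : Prop :=
  exists p q : tfun, trop_poly p /\ trop_poly q /\
    (exists x0, q x0 <> -oo) /\ forall x, f x = p x - q x.

Definition toplus (f g : tfun) : tfun := fun x => maxe (f x) (g x).
Definition todot (f g : tfun) : tfun := fun x => f x + g x.

Definition trel := tfun -> tfun -> Prop.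

Definition is_congruence (E : trel) : Prop :=
  [/\ (forall f g, E f g -> trop_rat f /\ trop_rat g),
      (forall f, trop_rat f -> E f f),
      (forall f g, E f g -> E g f),
      (forall f g h, E f g -> E g h -> E f h) &
      (forall f g h k, E f g -> E h k ->
          E (toplus f h) (toplus g k) /\ E (todot f h) (todot g k))].

Definition gen_cong (S : trel) : trel :=
  fun f g => forall C : trel, is_congruence C ->
    (forall a b, S a b -> C a b) -> C f g.

Definition diag : trel := fun f g => trop_rat f /\ f = g.
Definition fullrel : trel := fun f g => trop_rat f /\ trop_rat g.

Definition tvar (E : trel) : set point :=
  [set x | forall f g, E f g -> f x = g x].

Definition twist_rel (F1 F2 : trel) : trel :=
  gen_cong (fun a b => exists f1 f2 g1 g2,
    [/\ F1 f1 f2, F2 g1 g2,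
        a = toplus (todot f1 g1) (todot f2 g2) &
        b = toplus (todot f1 g2) (todot f2 g1)]).

End Tropical.

From Pilot Require Import Defs.
From mathcomp Require Import all_boot all_order all_algebra.
From mathcomp Require Import boolp classical_sets reals constructive_ereal.
From mathcomp Require Import ring.
Set Implicit Arguments.
Unset Strict Implicit.
Unset Printing Implicit Defensive.
Import Order.TTheory GRing.Theory Num.Theory.
Local Open Scope ring_scope.
Local Open Scope ereal_scope.
Local Open Scope classical_set_scope.

(* A point x lies in V(S) exactly when S is contained in the congruence of
   pairs of rational functions that agree at x, so V(S) = V(<S>) for the
   generated congruence <S>; parts (1) and (2) follow directly.  For (3), a
   twisted generator evaluated at x reads max(a+c, b+d) = max(a+d, b+c) with
   a, b, c, d < +oo the values of f1, f2, g1, g2, and this holds iff a = b or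
   c = d: if a < b and c < d, then b + d beats both a + d and b + c.
   The only algebra needed is that rational functions are closed under the
   tropical operations, p1/q1 (+) p2/q2 = (p1 q2 (+) p2 q1)/(q1 q2), with
   denominators real valued everywhere. *)

Section ExtendedRealCross.
Variable R : realDomainType.
Implicit Types a b c d : \bar R.

Lemma maxeD_cross_lt a b c d : b < +oo -> d < +oo -> a < b -> c < d ->
  maxe (a + d) (b + c) < maxe (a + c) (b + d).
Proof.
move=> bltoo dltoo ab cd.
have bfin : b \is a fin_num.
  by rewrite fin_numE -ltNye -ltey bltoo (le_lt_trans (leNye a) ab).
have dfin : d \is a fin_num.
  by rewrite fin_numE -ltNye -ltey dltoo (le_lt_trans (leNye c) cd).
rewrite lt_max; apply/orP; right.
by rewrite gt_max lteD2rE // lteD2lE // ab cd.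
Qed.

Lemma eq_maxeD_cross a b c d :
  a < +oo -> b < +oo -> c < +oo -> d < +oo ->
  maxe (a + c) (b + d) = maxe (a + d) (b + c) <-> a = b \/ c = d.
Proof.
move=> altoo bltoo cltoo dltoo; split; last by case=> ->; rewrite // maxC.
move=> eq_max.
have [ab|ba|->] := ltgtP a b; last by left.
all: have [cd|dc|->] := ltgtP c d; last by right.
- by have := maxeD_cross_lt bltoo dltoo ab cd; rewrite eq_max ltxx.
- by have := maxeD_cross_lt bltoo cltoo ab dc; rewrite eq_max ltxx.
- by have := maxeD_cross_lt altoo dltoo ba cd; rewrite maxC eq_max maxC ltxx.
- by have := maxeD_cross_lt altoo cltoo ba dc; rewrite maxC -eq_max maxC ltxx.
Qed.

End ExtendedRealCross.

Section TropicalRationalFunctions.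
Variables (R : realType) (n : nat).
Implicit Types (p q f g : tfun R n) (x : Defs.point R n).

Definition monomial (m : R * ('I_n -> nat)) x : R :=
  m.1 + \sum_(i < n) (m.2 i)%:R * x i.

Definition monomial_mul (m1 m2 : R * ('I_n -> nat)) : R * ('I_n -> nat) :=
  ((m1.1 + m2.1)%R, fun i => (m1.2 i + m2.2 i)%N).

Lemma monomial_mulE m1 m2 x :
  monomial (monomial_mul m1 m2) x = (monomial m1 x + monomial m2 x)%R.
Proof.
rewrite /monomial /=.
under eq_bigr => i _ do rewrite natrD mulrDl.
rewrite big_split /=; ring.
Qed.

Lemma trop_polyP p :
  trop_poly p <->
  exists s, forall x, p x = \big[maxe/-oo]_(m <- s) (monomial m x)%:E.
Proof. by []. Qed.

Lemma trop_poly_oplus p q :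
  trop_poly p -> trop_poly q -> trop_poly (toplus p q).
Proof.
move=> /trop_polyP[s1 ps1] /trop_polyP[s2 qs2].
apply/trop_polyP; exists (s1 ++ s2) => x.
by rewrite big_cat /toplus ps1 qs2.
Qed.

Lemma trop_poly_odot p q : trop_poly p -> trop_poly q -> trop_poly (todot p q).
Proof.
move=> /trop_polyP[s1 ps1] /trop_polyP[s2 qs2].
apply/trop_polyP; exists [seq monomial_mul m1 m2 | m1 <- s1, m2 <- s2] => x.
rewrite big_allpairs_dep /todot ps1 qs2.
rewrite (big_morph (fun e => e + _) (fun e1 e2 => adde_maxl e1 e2 _)
                   (addNye _)).
apply: eq_bigr => m1 _.
rewrite (big_morph (fun e => _ + e) (adde_maxr _) (addeNy _)).
by apply: eq_bigr => m2 _; rewrite monomial_mulE.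
Qed.

Lemma trop_poly_lty p x : trop_poly p -> p x < +oo.
Proof.
move=> /trop_polyP[s ->]; elim: s => [|m s IH]; first by rewrite big_nil.
by rewrite big_cons gt_max ltry.
Qed.

Lemma trop_poly_fin_num q x :
  trop_poly q -> (exists x0, q x0 <> -oo) -> q x \is a fin_num.
Proof.
move=> qP [x0]; have /trop_polyP[[|m s] qs] := qP; rewrite qs ?big_nil // => _.
rewrite fin_numE -ltey trop_poly_lty // andbT -ltNye qs big_cons.
by rewrite lt_max ltNyr.
Qed.

Lemma sube_maxe (a b : \bar R) (u v : R) :
  maxe (a - u%:E) (b - v%:E) = maxe (a + v%:E) (b + u%:E) - (u + v)%:E.
Proof.
rewrite adde_maxl; congr maxe.
- by case: a => // r; congr EFin; ring.
- by case: b => // r; congr EFin; ring.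
Qed.

Lemma sube_adde (a b : \bar R) (u v : R) :
  (a - u%:E) + (b - v%:E) = (a + b) - (u + v)%:E.
Proof.
by case: a => [r| |]; case: b => [s| |] //; congr EFin; ring.
Qed.

Lemma trop_ratP f :
  trop_rat f <-> exists p q, [/\ trop_poly p, trop_poly q,
    forall x, q x \is a fin_num & forall x, f x = p x - q x].
Proof.
split=> [[p [q [pP [qP [qN0 fE]]]]] | [p [q [pP qP qfin fE]]]].
  by exists p, q; split=> // x; apply: trop_poly_fin_num.
exists p, q; do 3!split=> //; exists (fun=> 0%R).
by move: (qfin (fun=> 0%R)); rewrite fin_numE => /andP[/eqP].
Qed.

Lemma trop_poly_cst (r : R) : trop_poly ((fun=> r%:E) : tfun R n).
Proof.
apply/trop_polyP; exists [:: (r, fun=> 0%N)] => x.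
by rewrite big_seq1 /monomial big1 ?addr0 // => i _; rewrite mul0r.
Qed.

Lemma trop_rat_cst (r : R) : trop_rat ((fun=> r%:E) : tfun R n).
Proof.
apply/trop_ratP; exists (fun=> r%:E), (fun=> 0%:E).
by split=> [||//|x]; rewrite ?sube0 //; apply: trop_poly_cst.
Qed.

Lemma trop_rat_oplus f g : trop_rat f -> trop_rat g -> trop_rat (toplus f g).
Proof.
move=> /trop_ratP[p1 [q1 [p1P q1P q1fin fE]]].
move=> /trop_ratP[p2 [q2 [p2P q2P q2fin gE]]].
apply/trop_ratP.
exists (toplus (todot p1 q2) (todot p2 q1)), (todot q1 q2); split.
- by apply: trop_poly_oplus; apply: trop_poly_odot.
- exact: trop_poly_odot.
- by move=> x; rewrite fin_numD q1fin q2fin.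
- move=> x; rewrite /toplus /todot fE gE.
  by rewrite -(fineK (q1fin x)) -(fineK (q2fin x)) sube_maxe.
Qed.

Lemma trop_rat_odot f g : trop_rat f -> trop_rat g -> trop_rat (todot f g).
Proof.
move=> /trop_ratP[p1 [q1 [p1P q1P q1fin fE]]].
move=> /trop_ratP[p2 [q2 [p2P q2P q2fin gE]]].
apply/trop_ratP; exists (todot p1 p2), (todot q1 q2); split.
- exact: trop_poly_odot.
- exact: trop_poly_odot.
- by move=> x; rewrite fin_numD q1fin q2fin.
- move=> x; rewrite /todot fE gE.
  by rewrite -(fineK (q1fin x)) -(fineK (q2fin x)) sube_adde.
Qed.

Lemma trop_rat_lty f x : trop_rat f -> f x < +oo.
Proof.
move=> /trop_ratP[p [q [pP _ qfin ->]]].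
by rewrite lte_add_pinfty ?trop_poly_lty // ltey_eq fin_numN qfin.
Qed.

Definition subtrel (S T : trel R n) := forall f g, S f g -> T f g.

Lemma congruence_sub_fullrel (C : trel R n) :
  is_congruence C -> subtrel C (@fullrel R n).
Proof. by case. Qed.

Definition agree_at x : trel R n := fun f g => @fullrel R n f g /\ f x = g x.

Lemma agree_at_congruence x : is_congruence (agree_at x).
Proof.
split.
- by move=> f g [].
- by [].
- by move=> f g [[fP gP] fg].
- by move=> f g h [[fP _] fg] [[_ hP] gh]; split; [|rewrite fg].
- move=> f g h k [[fP gP] fg] [[hP kP] hk].
  split; split; rewrite /toplus /todot ?fg ?hk //; split.
  + exact: trop_rat_oplus.
  + exact: trop_rat_oplus.
  + exact: trop_rat_odot.
  + exact: trop_rat_odot.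
Qed.

Lemma tvar_gen_cong (S : trel R n) :
  subtrel S (@fullrel R n) -> tvar (gen_cong S) = tvar S.
Proof.
move=> Srat; apply/seteqP; split=> x xV f g.
  by move=> Sfg; apply: xV => C _; apply.
move=> genfg; have [] // := genfg (agree_at x) (agree_at_congruence x).
by move=> a b Sab; split; [exact: Srat | exact: xV].
Qed.

Lemma tvar_diag : tvar (@diag R n) = setT.
Proof. by apply/seteqP; split=> // x _ f g [_ ->]. Qed.

Lemma tvar_fullrel : tvar (@fullrel R n) = set0.
Proof.
apply/seteqP; split=> // x xV.
have /eqP := xV _ _ (conj (trop_rat_cst 0) (trop_rat_cst 1)).
by rewrite eqe eq_sym oner_eq0.
Qed.

Lemma tvar_bigcup (I : Type) (Es : I -> trel R n) :
  tvar (fun f g => exists i, Es i f g) = \bigcap_(i in [set: I]) tvar (Es i).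
Proof.
apply/seteqP; split=> x xV.
  by move=> i _ f g Efg; apply: xV; exists i.
by move=> f g [i Efg]; exact: (xV i).
Qed.

Definition twist_gens (F1 F2 : trel R n) : trel R n := fun a b =>
  exists f1 f2 g1 g2, [/\ F1 f1 f2, F2 g1 g2,
    a = toplus (todot f1 g1) (todot f2 g2) &
    b = toplus (todot f1 g2) (todot f2 g1)].

Section Twist.
Variables F1 F2 : trel R n.
Hypotheses (F1rat : subtrel F1 (@fullrel R n))
           (F2rat : subtrel F2 (@fullrel R n)).

Lemma twist_gens_sub_fullrel : subtrel (twist_gens F1 F2) (@fullrel R n).
Proof.
move=> _ _ [f1 [f2 [g1 [g2 [/F1rat[f1P f2P] /F2rat[g1P g2P] -> ->]]]]].
by split; apply: trop_rat_oplus; apply: trop_rat_odot.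
Qed.

Lemma tvar_twist_gens : tvar (twist_gens F1 F2) = tvar F1 `|` tvar F2.
Proof.
apply/seteqP; split=> x xV.
- have gen_eq f1 f2 g1 g2 : F1 f1 f2 -> F2 g1 g2 ->
      toplus (todot f1 g1) (todot f2 g2) x =
        toplus (todot f1 g2) (todot f2 g1) x ->
      f1 x = f2 x \/ g1 x = g2 x.
    move=> /F1rat[f1P f2P] /F2rat[g1P g2P].
    by apply: (eq_maxeD_cross (trop_rat_lty x f1P) (trop_rat_lty x f2P)
                              (trop_rat_lty x g1P) (trop_rat_lty x g2P)).1.
  apply: contrapT => /not_orP[].
  move=> /existsNP[f1 /existsNP[f2 /not_implyP[F1f neq1]]].
  move=> /existsNP[g1 /existsNP[g2 /not_implyP[F2g neq2]]].
  have gen : twist_gens F1 F2 (toplus (todot f1 g1) (todot f2 g2))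
                              (toplus (todot f1 g2) (todot f2 g1)).
    by exists f1, f2, g1, g2.
  by case: (gen_eq _ _ _ _ F1f F2g (xV _ _ gen)).
- move=> _ _ [f1 [f2 [g1 [g2 [F1f F2g -> ->]]]]].
  rewrite /toplus /todot.
  by case: xV => [/(_ _ _ F1f) -> | /(_ _ _ F2g) ->]; rewrite // maxC.
Qed.

Lemma tvar_twist_rel : tvar (twist_rel F1 F2) = tvar F1 `|` tvar F2.
Proof.
rewrite -tvar_twist_gens; apply: tvar_gen_cong; exact: twist_gens_sub_fullrel.
Qed.

End Twist.

End TropicalRationalFunctions.

Theorem proposition3p8 (R : realType) (n : nat)
    (Lambda : Type) (Es : Lambda -> trel R n) (F1 F2 : trel R n) :
  (forall l, is_congruence (Es l)) ->
  is_congruence F1 -> is_congruence F2 ->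
  [/\ tvar (@diag R n) = setT /\ tvar (@fullrel R n) = set0,
      tvar (gen_cong (fun f g => exists l, Es l f g))
        = \bigcap_(l in [set: Lambda]) tvar (Es l) &
      tvar (twist_rel F1 F2) = tvar F1 `|` tvar F2].
Proof.
move=> Econg F1cong F2cong; split; [split| |].
- exact: tvar_diag.
- exact: tvar_fullrel.
- rewrite tvar_gen_cong ?tvar_bigcup // => f g [l].
  exact: congruence_sub_fullrel.
- by apply: tvar_twist_rel; apply: congruence_sub_fullrel.
Qed.
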